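(* Let $K$ be a positive integer and let $d,e$ be integers. Then, for each choice of sign (with $\pm$ and $\mp$ correlated throughout), \[ f_{1,2K+1,1}(q^{d},q^{e},q)\pm q^{\frac{K+d+e}{2}}f_{1,2K+1,1}(q^{1+K+d},q^{1+K+e},q) =f_{K+1,K+1,1}\big(\mp q^{(K+d+e)/2},q^{d},q\big) \mp q^{(K+2-d-e)/2}f_{K+1,K+1,1}\big(\mp q^{2+(3K-d-e)/2},q^{K+2-e},q\big). \]
   Context: Let $q=e^{2\pi i\tau}$ with $\operatorname{Im}\tau>0$, and for real $\alpha$ put $q^{\alpha}:=e^{2\pi i\alpha\tau}$. For positive integers $a,b,c$ and $x,y\in\mathbb{C}^*$, the Hecke-type double-sum is $f_{a,b,c}(x,y,q):=\Big(\sum_{r,s\ge0}-\sum_{r,s<0}\Big)(-1)^{r+s}x^ry^sq^{a\binom{r}{2}+brs+c\binom{s}{2}}$. *)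

From Stdlib Require Import Reals ZArith.
From Coquelicot Require Import Coquelicot.
Open Scope R_scope.

(* q^alpha := e^{2 pi i alpha tau}, written out via real exp/cos/sin. *)
Definition qpow (tau : C) (alpha : R) : C :=
  (exp (- 2 * PI * alpha * Im tau) * cos (2 * PI * alpha * Re tau),
   exp (- 2 * PI * alpha * Im tau) * sin (2 * PI * alpha * Re tau)).

Fixpoint Cpown (x : C) (n : nat) : C :=
  match n with O => RtoC 1 | S m => Cmult x (Cpown x m) end.

Definition Cpowz (x : C) (z : Z) : C :=
  if (0 <=? z)%Z then Cpown x (Z.to_nat z) else Cinv (Cpown x (Z.to_nat (- z))).

Fixpoint Csum (n : nat) (u : nat -> C) : C :=
  match n with O => RtoC 0 | S m => Cplus (Csum m u) (u m) end.

Definition hecke_term (a b c : Z) (x y tau : C) (r s : Z) : C :=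
  Cmult (Cmult (Cmult (Cpowz (RtoC (-1)) (r + s)) (Cpowz x r)) (Cpowz y s))
        (qpow tau (IZR (a * (r * (r - 1) / 2) + b * r * s + c * (s * (s - 1) / 2)))).

(* square partial sums: sum over 0<=r,s<N  minus sum over -N<=r,s<0 *)
Definition hecke_partial (a b c : Z) (x y tau : C) (N : nat) : C :=
  Cminus
    (Csum N (fun r => Csum N (fun s => hecke_term a b c x y tau (Z.of_nat r) (Z.of_nat s))))
    (Csum N (fun r => Csum N (fun s =>
        hecke_term a b c x y tau (- Z.of_nat (S r)) (- Z.of_nat (S s))))).

(* f_{a,b,c}(x,y,q) with q = e^{2 pi i tau}: limit of the square partial sums
   (the double sums converge absolutely for a,b,c > 0, |q|<1). *)
Definition hecke_f (a b c : Z) (x y tau : C) : C :=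
  (real (Lim_seq (fun N => Re (hecke_partial a b c x y tau N))),
   real (Lim_seq (fun N => Im (hecke_partial a b c x y tau N)))).

Definition sgnC (pm : bool) : C := if pm then RtoC 1 else RtoC (-1).

From Stdlib Require Import Reals ZArith Lia Lra.
From Coquelicot Require Import Coquelicot.
Open Scope R_scope.

(* Write sigma = ∓1.  Every term of each of the four double sums,
   including its prefactor, is a value g(U, W) = (-1)^U sigma^(U-W) q^E(U,W) of
   one "generic term", E being an explicit quadratic form in (U, W):
     - term (r, s) of f_{1,2K+1,1}(q^d, q^e)              is g(r+s,   r-s),
     - term (r, s) of ± q^((K+d+e)/2) f_{1,2K+1,1}(...)   is g(r+s+1, r-s),
     - term (u, v) of f_{K+1,K+1,1}(∓q^((K+d+e)/2), q^d)  is g(u+v,   v),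
     - term (u, v) of ∓ q^((K+2-d-e)/2) f_{K+1,K+1,1}(...) is -g(-u-v-1, v).
   Grouping terms along anti-diagonals ("shells"), the shells of both sides
   at a fixed level U enumerate g(U, W) over the same centred segment of W's,
   on the left split by the parity of W, on the right by the sign of W.  This
   gives shell-by-shell identities between finite sums.
   Analytically, for Im tau > 0 the terms decay like exp(-3(|r|+|s|)), so each
   f_{a,b,c} equals the series of its nonnegative-quadrant shells minus the
   series of its negative-quadrant shells; summing the shell identities gives
   the proposition. *)

(** * Exponent and sign algebra in [C] *)

Lemma C_ext (x y : C) : fst x = fst y -> snd x = snd y -> x = y.
Proof. destruct x, y; simpl; intros; subst; reflexivity. Qed.

Lemma qpow_add tau a b : Cmult (qpow tau a) (qpow tau b) = qpow tau (a + b).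
Proof.
  unfold qpow, Cmult; simpl.
  replace (- 2 * PI * (a + b) * Im tau)
    with ((- 2 * PI * a * Im tau) + (- 2 * PI * b * Im tau)) by ring.
  replace (2 * PI * (a + b) * Re tau)
    with ((2 * PI * a * Re tau) + (2 * PI * b * Re tau)) by ring.
  rewrite exp_plus, cos_plus, sin_plus.
  apply C_ext; simpl; ring.
Qed.

Lemma qpow_0 tau : qpow tau 0 = RtoC 1.
Proof.
  unfold qpow. apply C_ext; simpl;
  replace (- 2 * PI * 0 * Im tau) with 0 by ring;
  replace (2 * PI * 0 * Re tau) with 0 by ring;
  rewrite exp_0, ?cos_0, ?sin_0; ring.
Qed.

Lemma qpow_ext tau a b : a = b -> qpow tau a = qpow tau b.
Proof. intros ->; reflexivity. Qed.

Lemma qpow_nz tau a : qpow tau a <> RtoC 0.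
Proof.
  intros H. assert (H1 : Cmult (qpow tau a) (qpow tau (- a)) = RtoC 1).
  { rewrite qpow_add, <- (qpow_0 tau). apply qpow_ext; ring. }
  rewrite H, Cmult_0_l in H1. apply RtoC_inj in H1. lra.
Qed.

(* |q^a| = e^{-2 pi a Im tau}: this is where Im tau > 0 gives decay. *)
Lemma Cmod_qpow tau a : Cmod (qpow tau a) = exp (- 2 * PI * a * Im tau).
Proof.
  unfold Cmod, qpow; simpl.
  set (E := exp (-2 * PI * a * Im tau)). set (t := 2 * PI * a * Re tau).
  replace (E * cos t * (E * cos t * 1) + E * sin t * (E * sin t * 1))
    with (E * E * (Rsqr (sin t) + Rsqr (cos t))) by (unfold Rsqr; ring).
  rewrite sin2_cos2, Rmult_1_r. apply sqrt_square. apply Rlt_le, exp_pos.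
Qed.

Lemma Cinv_of_mult_1 (x y : C) : Cmult x y = RtoC 1 -> Cinv x = y.
Proof.
  intros H.
  assert (Hx : x <> RtoC 0).
  { intros ->. rewrite Cmult_0_l in H. apply RtoC_inj in H. lra. }
  rewrite <- (Cmult_1_r (Cinv x)), <- H, Cmult_assoc, Cinv_l by exact Hx.
  apply Cmult_1_l.
Qed.

Lemma Cpown_Cpow x n : Cpown x n = Cpow x n.
Proof. induction n as [|n IH]; simpl; [reflexivity | rewrite IH; reflexivity]. Qed.

Lemma Cpown_qpow tau a n : Cpown (qpow tau a) n = qpow tau (a * INR n).
Proof.
  induction n as [|n IH]; simpl Cpown.
  - rewrite <- (qpow_0 tau). apply qpow_ext. simpl; ring.
  - rewrite IH, qpow_add. apply qpow_ext. rewrite S_INR; ring.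
Qed.

Lemma Cpowz_qpow tau a z : Cpowz (qpow tau a) z = qpow tau (a * IZR z).
Proof.
  unfold Cpowz. destruct (Z.leb_spec 0 z); rewrite Cpown_qpow.
  - apply qpow_ext. rewrite INR_IZR_INZ, Z2Nat.id by lia. reflexivity.
  - apply Cinv_of_mult_1. rewrite qpow_add, <- (qpow_0 tau). apply qpow_ext.
    rewrite INR_IZR_INZ, Z2Nat.id, opp_IZR by lia. ring.
Qed.

Lemma Cpowz_mult x y z : x <> RtoC 0 -> y <> RtoC 0 ->
  Cpowz (Cmult x y) z = Cmult (Cpowz x z) (Cpowz y z).
Proof.
  intros Hx Hy.
  assert (Hmult : forall n, Cpown (Cmult x y) n = Cmult (Cpown x n) (Cpown y n))
    by (intros n; rewrite !Cpown_Cpow; apply Cpow_mult_l).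
  assert (Hnz : forall w n, w <> RtoC 0 -> Cpown w n <> RtoC 0)
    by (intros w n; rewrite Cpown_Cpow; apply Cpow_nz).
  unfold Cpowz. destruct (0 <=? z)%Z; rewrite Hmult; [reflexivity|].
  pose proof (Hnz x (Z.to_nat (- z)) Hx). pose proof (Hnz y (Z.to_nat (- z)) Hy).
  apply Cinv_of_mult_1. field. split; assumption.
Qed.

(* [signpow w z] is w^z for an involution w (w * w = 1): it only depends on
   the parity of z. *)
Definition signpow (w : C) (z : Z) : C := if Z.even z then RtoC 1 else w.

Lemma Cpown_involution w n : Cmult w w = RtoC 1 ->
  Cpown w n = if Nat.even n then RtoC 1 else w.
Proof.
  intros Hw. induction n as [|n IH]; simpl Cpown; [reflexivity|].
  rewrite IH, Nat.even_succ, <- Nat.negb_even.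
  destruct (Nat.even n); simpl; [apply Cmult_1_r | exact Hw].
Qed.

Lemma Z_even_of_nat n : Z.even (Z.of_nat n) = Nat.even n.
Proof.
  induction n as [|n IH]; [reflexivity|].
  rewrite Nat2Z.inj_succ, Z.even_succ, Nat.even_succ, <- Z.negb_even,
    <- Nat.negb_even, IH.
  reflexivity.
Qed.

Lemma Cpowz_involution w z : Cmult w w = RtoC 1 -> Cpowz w z = signpow w z.
Proof.
  intros Hw. unfold Cpowz, signpow.
  destruct (Z.leb_spec 0 z);
    rewrite Cpown_involution, <- Z_even_of_nat, Z2Nat.id by (exact Hw || lia).
  - reflexivity.
  - rewrite Z.even_opp. apply Cinv_of_mult_1.
    destruct (Z.even z); [apply Cmult_1_l | exact Hw].
Qed.

Lemma involution_nz w : Cmult w w = RtoC 1 -> w <> RtoC 0.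
Proof. intros H ->. rewrite Cmult_0_l in H. apply RtoC_inj in H. lra. Qed.

Lemma Cmod_involution w : Cmult w w = RtoC 1 -> Cmod w = 1.
Proof.
  intros H. assert (H1 : Cmod w * Cmod w = 1) by (rewrite <- Cmod_mult, H; apply Cmod_1).
  pose proof (Cmod_ge_0 w). nra.
Qed.

Lemma Cmod_signpow w z : Cmult w w = RtoC 1 -> Cmod (signpow w z) = 1.
Proof.
  intros H. unfold signpow. destruct (Z.even z); [apply Cmod_1 | exact (Cmod_involution w H)].
Qed.

Lemma signpow_shift w z1 z2 m : z1 = (z2 + 2 * m)%Z -> signpow w z1 = signpow w z2.
Proof. intros ->. unfold signpow. rewrite Z.even_add_mul_2. reflexivity. Qed.

Lemma signpow_succ w z : Cmult w w = RtoC 1 ->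
  signpow w (z + 1) = Cmult w (signpow w z).
Proof.
  intros Hw. unfold signpow. rewrite Z.even_add. simpl.
  destruct (Z.even z); simpl; symmetry; [apply Cmult_1_r | exact Hw].
Qed.

Lemma signpow_one z : signpow (RtoC 1) z = RtoC 1.
Proof. unfold signpow; destruct (Z.even z); reflexivity. Qed.

Lemma one_involution : Cmult (RtoC 1) (RtoC 1) = RtoC 1.
Proof. apply Cmult_1_l. Qed.

Lemma minus_one_involution : Cmult (RtoC (-1)) (RtoC (-1)) = RtoC 1.
Proof. apply C_ext; simpl; ring. Qed.

(** * Finite sums *)

Lemma Csum_S n u : Csum (S n) u = Cplus (Csum n u) (u n).
Proof. reflexivity. Qed.

Lemma Csum_ext_lt n u v : (forall i, (i < n)%nat -> u i = v i) -> Csum n u = Csum n v.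
Proof.
  induction n as [|n IH]; intros H; simpl; [reflexivity|].
  rewrite IH by (intros; apply H; lia). rewrite H by lia. reflexivity.
Qed.

Lemma Csum_ext n u v : (forall i, u i = v i) -> Csum n u = Csum n v.
Proof. intros; apply Csum_ext_lt; auto. Qed.

Lemma Csum_plus n u v :
  Csum n (fun i => Cplus (u i) (v i)) = Cplus (Csum n u) (Csum n v).
Proof. induction n as [|n IH]; simpl; [apply C_ext; simpl; ring | rewrite IH; ring]. Qed.

Lemma Csum_minus n u v :
  Csum n (fun i => Cminus (u i) (v i)) = Cminus (Csum n u) (Csum n v).
Proof. induction n as [|n IH]; simpl; [apply C_ext; simpl; ring | rewrite IH; ring]. Qed.

Lemma Csum_scal n c u : Csum n (fun i => Cmult c (u i)) = Cmult c (Csum n u).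
Proof. induction n as [|n IH]; simpl; [apply C_ext; simpl; ring | rewrite IH; ring]. Qed.

Lemma Csum_split m k u :
  Csum (m + k) u = Cplus (Csum m u) (Csum k (fun j => u (m + j)%nat)).
Proof.
  induction k as [|k IH]; simpl.
  - rewrite Nat.add_0_r. apply C_ext; simpl; ring.
  - rewrite Nat.add_succ_r. simpl. rewrite IH. ring.
Qed.

Lemma Csum_rev n u : Csum n u = Csum n (fun j => u (n - 1 - j)%nat).
Proof.
  revert u. induction n as [|n IH]; intros u; [reflexivity|].
  change (Csum (S n) (fun j => u (S n - 1 - j)%nat))
    with (Csum (1 + n) (fun j => u (S n - 1 - j)%nat)).
  rewrite Csum_split, (Csum_ext_lt n _ (fun j => u (n - 1 - j)%nat))
    by (intros; f_equal; lia).
  rewrite <- IH. simpl. replace (n - 0 - 0)%nat with n by lia. ring.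
Qed.

Lemma Csum_parity m u :
  Csum (2 * m + 1) u =
  Cplus (Csum (m + 1) (fun i => u (2 * i)%nat)) (Csum m (fun i => u (2 * i + 1)%nat)).
Proof.
  induction m as [|m IH]; [simpl; ring|].
  replace (2 * S m + 1)%nat with (S (S (2 * m + 1))) by lia.
  replace (S m + 1)%nat with (S (m + 1)) by lia.
  rewrite !Csum_S, IH.
  replace (2 * (m + 1))%nat with (S (2 * m + 1)) by lia.
  ring.
Qed.

Definition Csum_centred (G : Z -> C) (n : nat) : C :=
  Csum (2 * n + 3) (fun j => G (Z.of_nat j - (Z.of_nat n + 1))%Z).

Lemma Csum_centred_sign G n : Csum_centred G n =
  Cplus (Csum (n + 1) (fun i => G (Z.of_nat i - (Z.of_nat n + 1))%Z))
        (Csum (n + 2) (fun i => G (Z.of_nat n + 1 - Z.of_nat i)%Z)).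
Proof.
  unfold Csum_centred. replace (2 * n + 3)%nat with ((n + 1) + (n + 2))%nat by lia.
  rewrite Csum_split. f_equal.
  rewrite Csum_rev. apply Csum_ext_lt. intros i Hi. f_equal. lia.
Qed.

Lemma Csum_centred_parity G n : Csum_centred G n =
  Cplus (Csum (n + 2) (fun i => G (2 * Z.of_nat i - (Z.of_nat n + 1))%Z))
        (Csum (n + 1) (fun i => G (2 * Z.of_nat i - Z.of_nat n)%Z)).
Proof.
  unfold Csum_centred. replace (2 * n + 3)%nat with (2 * (n + 1) + 1)%nat by lia.
  rewrite Csum_parity. replace (n + 1 + 1)%nat with (n + 2)%nat by lia.
  f_equal; apply Csum_ext; intros i; f_equal; lia.
Qed.

Lemma Csum_centred_parity_rev G n : Csum_centred G n =
  Cplus (Csum (n + 1) (fun i => G (Z.of_nat n - 2 * Z.of_nat i)%Z))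
        (Csum (n + 2) (fun i => G (Z.of_nat n + 1 - 2 * Z.of_nat i)%Z)).
Proof.
  assert (Hmirror : Csum_centred G n = Csum_centred (fun w => G (- w)%Z) n).
  { unfold Csum_centred. rewrite Csum_rev. apply Csum_ext_lt. intros; f_equal; lia. }
  rewrite Hmirror, Csum_centred_parity, Cplus_comm.
  f_equal; apply Csum_ext; intros; f_equal; lia.
Qed.

(** * The generic term and the shell identities *)

Lemma hecke_term_normal a b c w al be tau r s : Cmult w w = RtoC 1 ->
  hecke_term a b c (Cmult w (qpow tau al)) (qpow tau be) tau r s =
  Cmult (Cmult (signpow (RtoC (-1)) (r + s)) (signpow w r))
    (qpow tau (al * IZR r + be * IZR s +
       IZR (a * (r * (r - 1) / 2) + b * r * s + c * (s * (s - 1) / 2)))).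
Proof.
  intros Hw. unfold hecke_term.
  rewrite (Cpowz_involution (RtoC (-1))) by exact minus_one_involution.
  rewrite Cpowz_mult, Cpowz_involution, !Cpowz_qpow, <- !qpow_add
    by (exact Hw || apply involution_nz, Hw || apply qpow_nz).
  replace (al * IZR r) with (IZR r * al) by ring.
  replace (be * IZR s) with (IZR s * be) by ring.
  ring.
Qed.

(* The integer binomial z(z-1)/2 is computed exactly. *)
Lemma IZR_binom2 z : IZR (z * (z - 1) / 2) = IZR z * (IZR z - 1) / 2.
Proof.
  assert (He : Z.even (z * (z - 1)) = true).
  { rewrite Z.even_mul, Z.even_sub. destruct (Z.even z); reflexivity. }
  apply Z.even_spec in He. destruct He as [m Hm]. rewrite Hm.
  rewrite Z.mul_comm, Z.div_mul by lia.
  assert (H : IZR (z * (z - 1)) = IZR (2 * m)) by (rewrite Hm; reflexivity).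
  rewrite mult_IZR, minus_IZR, mult_IZR in H. simpl in H. lra.
Qed.

(* The sign sigma = ∓1 of the first argument of the right-hand sums. *)
Definition sigma (pm : bool) : C := Copp (sgnC pm).

Lemma sigma_involution pm : Cmult (sigma pm) (sigma pm) = RtoC 1.
Proof. unfold sigma, sgnC; destruct pm; apply C_ext; simpl; ring. Qed.

Lemma sgnC_sigma pm : sgnC pm = Cmult (RtoC (-1)) (sigma pm).
Proof. unfold sigma, sgnC; destruct pm; apply C_ext; simpl; ring. Qed.

Definition generic_exponent (K : nat) (d e : Z) (U W : Z) : R :=
  (INR K + 1) * IZR U * IZR U / 2 - INR K * IZR W * IZR W / 2
  + (IZR d + IZR e - 1) * IZR U / 2 + (IZR d - IZR e) * IZR W / 2.

Definition generic_term tau pm K d e (U W : Z) : C :=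
  Cmult (Cmult (signpow (RtoC (-1)) U) (signpow (sigma pm) (U - W)))
        (qpow tau (generic_exponent K d e U W)).

Ltac exponent_field :=
  unfold generic_exponent;
  rewrite ?plus_IZR, ?minus_IZR, ?opp_IZR, ?mult_IZR, ?IZR_binom2,
    ?plus_IZR, ?minus_IZR, ?opp_IZR, ?mult_IZR;
  rewrite <- ?INR_IZR_INZ; simpl IZR; field.

Section GenericTerms.
Variables (tau : C) (pm : bool) (K : nat) (d e : Z).
Let k := Z.of_nat K.
Let kr := INR K.
Let g := generic_term tau pm K d e.

Lemma term1_generic r s :
  hecke_term 1 (2 * k + 1) 1 (qpow tau (IZR d)) (qpow tau (IZR e)) tau r s
  = g (r + s) (r - s).
Proof.
  rewrite <- (Cmult_1_l (qpow tau (IZR d))).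
  rewrite hecke_term_normal by exact one_involution. unfold g, generic_term.
  rewrite signpow_one, (signpow_shift _ (r + s - (r - s)) 0 s) by ring.
  f_equal. apply qpow_ext. unfold k, kr. exponent_field.
Qed.

Lemma term2_generic r s :
  Cmult (Cmult (sgnC pm) (qpow tau ((kr + IZR d + IZR e) / 2)))
   (hecke_term 1 (2 * k + 1) 1 (qpow tau (1 + kr + IZR d))
      (qpow tau (1 + kr + IZR e)) tau r s)
  = g (r + s + 1) (r - s).
Proof.
  rewrite <- (Cmult_1_l (qpow tau (1 + kr + IZR d))).
  rewrite hecke_term_normal by exact one_involution. unfold g, generic_term.
  rewrite signpow_one, signpow_succ by exact minus_one_involution.
  rewrite (signpow_shift _ (r + s + 1 - (r - s)) (0 + 1) s) by ring.
  rewrite signpow_succ by apply sigma_involution. rewrite sgnC_sigma.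
  rewrite (qpow_ext tau (generic_exponent K d e (r + s + 1) (r - s))
    ((kr + IZR d + IZR e) / 2 + ((1 + kr + IZR d) * IZR r + (1 + kr + IZR e) * IZR s +
     IZR (1 * (r * (r - 1) / 2) + (2 * k + 1) * r * s + 1 * (s * (s - 1) / 2)))))
    by (unfold k, kr; exponent_field).
  change (signpow (sigma pm) 0) with (RtoC 1).
  rewrite <- (qpow_add tau ((kr + IZR d + IZR e) / 2)). ring.
Qed.

Lemma term3_generic u v :
  hecke_term (k + 1) (k + 1) 1
    (Cmult (Copp (sgnC pm)) (qpow tau ((kr + IZR d + IZR e) / 2)))
    (qpow tau (IZR d)) tau u v
  = g (u + v) v.
Proof.
  fold (sigma pm). rewrite hecke_term_normal by apply sigma_involution.
  unfold g, generic_term. replace (u + v - v)%Z with u by ring.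
  f_equal. apply qpow_ext. unfold k, kr. exponent_field.
Qed.

Lemma term4_generic u v :
  Cmult (Cmult (sgnC pm) (qpow tau ((kr + 2 - IZR d - IZR e) / 2)))
  (hecke_term (k + 1) (k + 1) 1
    (Cmult (Copp (sgnC pm)) (qpow tau (2 + (3 * kr - IZR d - IZR e) / 2)))
    (qpow tau (kr + 2 - IZR e)) tau u v)
  = g (- (u + v) - 1) v.
Proof.
  fold (sigma pm). rewrite hecke_term_normal by apply sigma_involution.
  unfold g, generic_term.
  rewrite (signpow_shift _ (- (u + v) - 1) ((u + v) + 1) (- (u + v) - 1)) by ring.
  rewrite signpow_succ by exact minus_one_involution.
  rewrite (signpow_shift _ (- (u + v) - 1 - v) (u + 1) (- u - v - 1)) by ring.
  rewrite signpow_succ by apply sigma_involution. rewrite sgnC_sigma.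
  rewrite (qpow_ext tau (generic_exponent K d e (- (u + v) - 1) v)
    ((kr + 2 - IZR d - IZR e) / 2 + ((2 + (3 * kr - IZR d - IZR e) / 2) * IZR u
     + (kr + 2 - IZR e) * IZR v + IZR ((k + 1) * (u * (u - 1) / 2)
     + (k + 1) * u * v + 1 * (v * (v - 1) / 2)))))
    by (unfold k, kr; exponent_field).
  rewrite <- (qpow_add tau ((kr + 2 - IZR d - IZR e) / 2)). ring.
Qed.
End GenericTerms.

(* Shells of a double sum: the anti-diagonal r + s = n of the nonnegative
   quadrant, and the anti-diagonal r + s = -(n+2) of the negative quadrant. *)
Definition shell_pos (T : Z -> Z -> C) (n : nat) : C :=
  Csum (S n) (fun i => T (Z.of_nat i) (Z.of_nat (n - i))).
Definition shell_neg (T : Z -> Z -> C) (n : nat) : C :=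
  Csum (S n) (fun i => T (- Z.of_nat (S i))%Z (- Z.of_nat (S (n - i)))%Z).

Section Shells.
Variables (tau : C) (pm : bool) (K : nat) (d e : Z).
Let k := Z.of_nat K.
Let kr := INR K.
Let t1 := hecke_term 1 (2 * k + 1) 1 (qpow tau (IZR d)) (qpow tau (IZR e)) tau.
Let t2 := hecke_term 1 (2 * k + 1) 1
            (qpow tau (1 + kr + IZR d)) (qpow tau (1 + kr + IZR e)) tau.
Let t3 := hecke_term (k + 1) (k + 1) 1
            (Cmult (Copp (sgnC pm)) (qpow tau ((kr + IZR d + IZR e) / 2)))
            (qpow tau (IZR d)) tau.
Let t4 := hecke_term (k + 1) (k + 1) 1
            (Cmult (Copp (sgnC pm)) (qpow tau (2 + (3 * kr - IZR d - IZR e) / 2)))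
            (qpow tau (kr + 2 - IZR e)) tau.
Let c1 := Cmult (sgnC pm) (qpow tau ((kr + IZR d + IZR e) / 2)).
Let c2 := Cmult (sgnC pm) (qpow tau ((kr + 2 - IZR d - IZR e) / 2)).
Let g := generic_term tau pm K d e.

(* Level U = n+1 >= 1: the left side enumerates g(n+1, .) by parity of W,
   the right side by sign of W. *)
Lemma shell_identity_pos n :
  Cplus (shell_pos t1 (S n)) (Cmult c1 (shell_pos t2 n)) =
  Cplus (shell_pos t3 (S n)) (Cmult c2 (shell_neg t4 n)).
Proof.
  set (G := g (Z.of_nat n + 1)%Z).
  unfold shell_pos, shell_neg. rewrite <- !Csum_scal.
  replace (S (S n)) with (n + 2)%nat by lia. replace (S n) with (n + 1)%nat by lia.
  transitivity (Csum_centred G n); [rewrite Csum_centred_parity | rewrite Csum_centred_sign, Cplus_comm];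
    f_equal; apply Csum_ext_lt; intros i Hi.
  - unfold t1, G, g, k. rewrite (term1_generic tau pm). f_equal; lia.
  - unfold t2, c1, G, g, kr, k. rewrite term2_generic. f_equal; lia.
  - unfold t3, G, g, kr, k. rewrite term3_generic. f_equal; lia.
  - unfold t4, c2, G, g, kr, k. rewrite term4_generic. f_equal; lia.
Qed.

Lemma shell_identity_pos0 : shell_pos t1 0 = shell_pos t3 0.
Proof.
  unfold shell_pos. simpl Csum. unfold t1, t3, kr, k.
  rewrite (term1_generic tau pm), term3_generic. reflexivity.
Qed.

Lemma shell_identity_neg n :
  Cplus (shell_neg t1 n) (Cmult c1 (shell_neg t2 (S n))) =
  Cplus (shell_neg t3 n) (Cmult c2 (shell_pos t4 (S n))).
Proof.
  set (G := g (- (Z.of_nat n + 2))%Z).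
  unfold shell_pos, shell_neg. rewrite <- !Csum_scal.
  replace (S (S n)) with (n + 2)%nat by lia. replace (S n) with (n + 1)%nat by lia.
  transitivity (Csum_centred G n); [rewrite Csum_centred_parity_rev | rewrite Csum_centred_sign];
    f_equal; apply Csum_ext_lt; intros i Hi.
  - unfold t1, G, g, k. rewrite (term1_generic tau pm). f_equal; lia.
  - unfold t2, c1, G, g, kr, k. rewrite term2_generic. f_equal; lia.
  - unfold t3, G, g, kr, k. rewrite term3_generic. f_equal; lia.
  - unfold t4, c2, G, g, kr, k. rewrite term4_generic. f_equal; lia.
Qed.

Lemma shell_identity_neg0 : Cmult c1 (shell_neg t2 0) = Cmult c2 (shell_pos t4 0).
Proof.
  unfold shell_pos, shell_neg. simpl Csum. rewrite !Cplus_0_l.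
  unfold t2, t4, c1, c2, kr, k. rewrite term2_generic, term4_generic. f_equal; lia.
Qed.
End Shells.

(** * Convergence of square partial sums along shells *)

Definition Ccv (u : nat -> C) (l : C) :=
  forall eps, 0 < eps -> exists N, forall n, (N <= n)%nat -> Cmod (Cminus (u n) l) < eps.

Lemma Ccv_unique u l1 l2 : Ccv u l1 -> Ccv u l2 -> l1 = l2.
Proof.
  intros H1 H2.
  assert (Hsmall : forall eps, 0 < eps -> Cmod (Cminus l1 l2) < eps).
  { intros eps He. destruct (H1 (eps / 2) ltac:(lra)) as [N1 HN1].
    destruct (H2 (eps / 2) ltac:(lra)) as [N2 HN2].
    specialize (HN1 (N1 + N2)%nat ltac:(lia)). specialize (HN2 (N1 + N2)%nat ltac:(lia)).
    replace (Cminus l1 l2) with (Cplus (Copp (Cminus (u (N1 + N2)%nat) l1))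
                                       (Cminus (u (N1 + N2)%nat) l2)) by ring.
    eapply Rle_lt_trans; [apply Cmod_triangle|]. rewrite Cmod_opp. lra. }
  assert (H0 : Cmod (Cminus l1 l2) = 0).
  { pose proof (Cmod_ge_0 (Cminus l1 l2)).
    destruct (Req_dec (Cmod (Cminus l1 l2)) 0) as [E|E]; [exact E|].
    specialize (Hsmall (Cmod (Cminus l1 l2)) ltac:(lra)). lra. }
  apply Cmod_eq_0 in H0.
  replace l1 with (Cplus (Cminus l1 l2) l2) by ring. rewrite H0. ring.
Qed.

Lemma Ccv_minus u v l1 l2 :
  Ccv u l1 -> Ccv v l2 -> Ccv (fun n => Cminus (u n) (v n)) (Cminus l1 l2).
Proof.
  intros H1 H2 eps He.
  destruct (H1 (eps / 2) ltac:(lra)) as [N1 HN1].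
  destruct (H2 (eps / 2) ltac:(lra)) as [N2 HN2].
  exists (N1 + N2)%nat. intros n Hn.
  specialize (HN1 n ltac:(lia)). specialize (HN2 n ltac:(lia)).
  replace (Cminus (Cminus (u n) (v n)) (Cminus l1 l2))
    with (Cplus (Cminus (u n) l1) (Copp (Cminus (v n) l2))) by ring.
  eapply Rle_lt_trans; [apply Cmod_triangle|]. rewrite Cmod_opp. lra.
Qed.

Lemma sum_n_Csum (a : nat -> C) n : sum_n a n = Csum (S n) a.
Proof.
  induction n as [|n IH].
  - rewrite sum_O. simpl. rewrite Cplus_0_l. reflexivity.
  - rewrite sum_Sn, IH. reflexivity.
Qed.

Lemma is_series_Ccv (a : nat -> C) l : is_series a l -> Ccv (fun n => Csum n a) l.
Proof.
  intros H eps Heps.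
  destruct (proj1 (filterlim_locally (sum_n a) l) H (mkposreal (eps / 2) ltac:(lra)))
    as [N HN].
  exists (S N). intros [|n] Hn; [lia|].
  specialize (HN n ltac:(lia)). rewrite sum_n_Csum in HN. destruct HN as [H1 H2].
  assert (Hs : sqrt 2 < 2).
  { rewrite <- (sqrt_square 2) at 2 by lra. apply sqrt_lt_1_alt; lra. }
  eapply Rle_lt_trans; [apply Cmod_2Rmax|].
  assert (Rmax (Rabs (fst (Csum (S n) a - l)%C)) (Rabs (snd (Csum (S n) a - l)%C)) < eps / 2).
  { apply Rmax_lub_lt; [revert H1 | revert H2];
      unfold ball; simpl; unfold AbsRing_ball, abs, minus, plus, opp; simpl;
      intros Hb; (eapply Rle_lt_trans; [|exact Hb]); right; f_equal; ring. }
  pose proof (sqrt_pos 2). nra.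
Qed.

Lemma Csum_bound n u B :
  (forall i, (i < n)%nat -> Cmod (u i) <= B) -> Cmod (Csum n u) <= INR n * B.
Proof.
  induction n as [|n IH]; intros H; simpl Csum.
  - rewrite Cmod_0. simpl; lra.
  - eapply Rle_trans; [apply Cmod_triangle|]. rewrite S_INR.
    specialize (IH (fun i Hi => H i ltac:(lia))). specialize (H n ltac:(lia)). lra.
Qed.

Lemma Csum_shells_triangle (T : nat -> nat -> C) N :
  Csum N (fun n => Csum (S n) (fun i => T i (n - i)%nat)) =
  Csum N (fun r => Csum (N - r) (T r)).
Proof.
  induction N as [|N IH]; [reflexivity|].
  rewrite Csum_S, IH.
  rewrite (Csum_ext_lt (S N) (fun r => Csum (S N - r) (T r))
             (fun r => Cplus (Csum (N - r) (T r)) (T r (N - r)%nat)))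
    by (intros i Hi; replace (S N - i)%nat with (S (N - i)) by lia; reflexivity).
  rewrite Csum_plus, (Csum_S N (fun i => Csum (N - i) (T i))).
  replace (N - N)%nat with 0%nat by lia. simpl (Csum 0 _). ring.
Qed.

Lemma Csum_square_minus_triangle (T : nat -> nat -> C) M :
  Cminus (Csum M (fun r => Csum M (T r)))
         (Csum M (fun n => Csum (S n) (fun i => T i (n - i)%nat)))
  = Csum M (fun r => Csum r (fun j => T r (M - r + j)%nat)).
Proof.
  rewrite Csum_shells_triangle, <- Csum_minus. apply Csum_ext_lt. intros r Hr.
  replace M with ((M - r) + r)%nat at 1 by lia. rewrite Csum_split. ring.
Qed.

Lemma exp_neg_INR_pow n : exp (- INR n) = (exp (-1)) ^ n.
Proof.
  induction n as [|n IH].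
  - simpl. rewrite Ropp_0. apply exp_0.
  - rewrite S_INR. simpl. rewrite <- IH, <- exp_plus. f_equal. ring.
Qed.

Lemma exp_neg_INR_small eps :
  0 < eps -> exists N, forall n, (N <= n)%nat -> exp (- INR n) < eps.
Proof.
  intros He. destruct (INR_archimed 1 (- ln eps) ltac:(lra)) as [N HN].
  exists N. intros n Hn. apply le_INR in Hn.
  rewrite <- (exp_ln eps He). apply exp_increasing. lra.
Qed.

Lemma exp_le_mono x y : x <= y -> exp x <= exp y.
Proof. intros [H|H]; [apply Rlt_le, exp_increasing, H | rewrite H; apply Rle_refl]. Qed.

Lemma sq_exp_decay x : 0 <= x -> (x + 1) * (x + 1) * exp (-3 * x) <= exp (- x).
Proof.
  intros Hx. pose proof (exp_ineq1_le x) as H1.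
  assert (E : exp x * exp x * exp (-3 * x) = exp (- x))
    by (rewrite <- !exp_plus; f_equal; ring).
  pose proof (exp_pos (-3 * x)).
  rewrite <- E. apply Rmult_le_compat_r; [lra|]. apply Rmult_le_compat; lra.
Qed.

Section SquareSums.
Variables (T : nat -> nat -> C) (N0 : nat).
Hypothesis T_decay : forall r s, (N0 <= r + s)%nat -> Cmod (T r s) <= exp (-3 * INR (r + s)).
Let shell n := Csum (S n) (fun i => T i (n - i)%nat).

Lemma shell_decay n : (N0 <= n)%nat -> Cmod (shell n) <= exp (- INR n).
Proof.
  intros Hn. eapply Rle_trans.
  - apply (Csum_bound _ _ (exp (-3 * INR n))). intros i Hi.
    replace n with (i + (n - i))%nat at 2 by lia. apply T_decay. lia.
  - eapply Rle_trans; [|apply sq_exp_decay, pos_INR].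
    pose proof (pos_INR n). pose proof (exp_pos (-3 * INR n)). rewrite S_INR. nra.
Qed.

Lemma ex_series_shells : ex_series shell.
Proof.
  apply (ex_series_incr_n shell N0).
  apply (@ex_series_le C_AbsRing C_CompleteNormedModule _ (fun k => exp (-1) ^ k)).
  - intros n. change (norm (shell (N0 + n)%nat)) with (Cmod (shell (N0 + n)%nat)).
    eapply Rle_trans; [apply shell_decay; lia|]. rewrite <- exp_neg_INR_pow.
    apply exp_le_mono. rewrite plus_INR. pose proof (pos_INR N0). lra.
  - apply ex_series_geom. rewrite Rabs_pos_eq by (apply Rlt_le, exp_pos).
    rewrite <- exp_0. apply exp_increasing. lra.
Qed.

Lemma corner_decay M : (N0 <= M)%nat ->
  Cmod (Csum M (fun r => Csum r (fun j => T r (M - r + j)%nat))) <= exp (- INR M).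
Proof.
  intros HM.
  assert (Hc : Cmod (Csum M (fun r => Csum r (fun j => T r (M - r + j)%nat)))
               <= INR M * (INR M * exp (-3 * INR M))).
  { apply Csum_bound. intros r Hr.
    eapply Rle_trans; [apply (Csum_bound _ _ (exp (-3 * INR M)))|].
    - intros j Hj. eapply Rle_trans; [apply T_decay; lia|].
      apply exp_le_mono. apply Rmult_le_compat_neg_l; [lra|]. apply le_INR. lia.
    - apply Rmult_le_compat_r; [apply Rlt_le, exp_pos|]. apply le_INR. lia. }
  eapply Rle_trans; [exact Hc|]. eapply Rle_trans; [|apply sq_exp_decay, pos_INR].
  pose proof (pos_INR M). pose proof (exp_pos (-3 * INR M)). nra.
Qed.

Lemma square_sums_Ccv : exists l, is_series shell l /\
  Ccv (fun M => Csum M (fun r => Csum M (T r))) l.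
Proof.
  destruct ex_series_shells as [l Hl]. exists l. split; [exact Hl|].
  intros eps He.
  destruct (is_series_Ccv shell l Hl (eps / 2) ltac:(lra)) as [N1 HN1].
  destruct (exp_neg_INR_small (eps / 2) ltac:(lra)) as [N2 HN2].
  exists (N0 + N1 + N2)%nat. intros M HM.
  specialize (HN1 M ltac:(lia)). specialize (HN2 M ltac:(lia)).
  pose proof (corner_decay M ltac:(lia)) as Hc.
  rewrite <- Csum_square_minus_triangle in Hc. fold shell in Hc.
  replace (Cminus (Csum M (fun r => Csum M (T r))) l)
    with (Cplus (Cminus (Csum M (fun r => Csum M (T r))) (Csum M shell))
                (Cminus (Csum M shell) l)) by ring.
  eapply Rle_lt_trans; [apply Cmod_triangle|]. lra.
Qed.
End SquareSums.

(** * Hecke-type double sums as differences of shell series *)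

Lemma hecke_f_of_Ccv a b c x y tau L :
  Ccv (hecke_partial a b c x y tau) L -> hecke_f a b c x y tau = L.
Proof.
  intros H. unfold hecke_f.
  assert (Hpart : forall p : C -> R, (forall z, Rabs (p z) <= Cmod z) ->
            (forall z w, p (Cminus z w) = p z - p w) ->
            Lim_seq (fun N => p (hecke_partial a b c x y tau N)) = Finite (p L)).
  { intros p Hp Hlin. apply is_lim_seq_unique, is_lim_seq_Reals. intros eps He.
    destruct (H eps He) as [N HN]. exists N. intros n Hn. unfold R_dist.
    rewrite <- Hlin. eapply Rle_lt_trans; [apply Hp | apply HN; lia]. }
  rewrite (Hpart Re), (Hpart Im).
  - destruct L; reflexivity.
  - intros z. eapply Rle_trans; [apply Rmax_r | apply Rmax_Cmod].
  - intros z w. unfold Im, Cminus, Cplus, Copp; simpl; ring.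
  - apply re_le_Cmod.
  - intros z w. unfold Re, Cminus, Cplus, Copp; simpl; ring.
Qed.

Lemma int_binom_nonneg z : 0 <= IZR z * (IZR z - 1).
Proof.
  destruct (Z.le_gt_cases z 0) as [H|H].
  - apply IZR_le in H. nra.
  - assert (1 <= IZR z) by (apply IZR_le; lia). nra.
Qed.

Lemma hecke_exponent_lower a b c al be r s :
  (1 <= a)%Z -> (1 <= b)%Z -> (1 <= c)%Z -> (0 <= r * s)%Z ->
  al * IZR r + be * IZR s + IZR (a * (r * (r - 1) / 2) + b * r * s + c * (s * (s - 1) / 2))
  >= (Rabs (IZR r) + Rabs (IZR s)) * (Rabs (IZR r) + Rabs (IZR s)) / 2
     - (Rabs al + Rabs be + 1) * (Rabs (IZR r) + Rabs (IZR s)).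
Proof.
  intros Ha Hb Hc Hrs.
  rewrite !plus_IZR, !mult_IZR, !IZR_binom2.
  apply IZR_le in Ha, Hb, Hc, Hrs. rewrite mult_IZR in Hrs.
  set (R := IZR r) in *. set (S := IZR s) in *.
  pose proof (int_binom_nonneg r) as hR. pose proof (int_binom_nonneg s) as hS.
  fold R S in hR, hS.
  assert (h1 : 0 <= (IZR a - 1) * (R * (R - 1))) by (apply Rmult_le_pos; lra).
  assert (h2 : 0 <= (IZR b - 1) * (R * S)) by (apply Rmult_le_pos; lra).
  assert (h3 : 0 <= (IZR c - 1) * (S * (S - 1))) by (apply Rmult_le_pos; lra).
  assert (h4 : - (Rabs al * Rabs R) <= al * R).
  { rewrite <- Rabs_mult. pose proof (Rle_abs (- (al * R))). rewrite Rabs_Ropp in H. lra. }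
  assert (h5 : - (Rabs be * Rabs S) <= be * S).
  { rewrite <- Rabs_mult. pose proof (Rle_abs (- (be * S))). rewrite Rabs_Ropp in H. lra. }
  assert (h6 : Rabs R * Rabs S = R * S) by (rewrite <- Rabs_mult; apply Rabs_pos_eq; lra).
  assert (h7 : Rabs R * Rabs R = R * R) by (rewrite <- Rabs_mult; apply Rabs_pos_eq; nra).
  assert (h8 : Rabs S * Rabs S = S * S) by (rewrite <- Rabs_mult; apply Rabs_pos_eq; nra).
  pose proof (Rabs_pos R). pose proof (Rabs_pos S).
  pose proof (Rabs_pos al). pose proof (Rabs_pos be).
  assert (h9 : Rabs al * Rabs R <= Rabs al * (Rabs R + Rabs S)) by nra.
  assert (h10 : Rabs be * Rabs S <= Rabs be * (Rabs R + Rabs S)) by nra.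
  nra.
Qed.

Lemma exponent_decay lam X m C0 :
  0 < lam -> 0 <= m -> X >= m * m / 2 - C0 * m -> 2 * C0 + 6 / lam <= m ->
  exp (- (lam * X)) <= exp (-3 * m).
Proof.
  intros Hl Hm HX Hlarge. apply exp_le_mono.
  assert (H3 : 3 <= lam * (m / 2 - C0)).
  { replace 3 with (lam * (3 / lam)) by (field; lra).
    apply Rmult_le_compat_l; lra. }
  nra.
Qed.

Lemma hecke_term_decay a b c w al be tau r s :
  (1 <= a)%Z -> (1 <= b)%Z -> (1 <= c)%Z -> 0 < Im tau -> Cmult w w = RtoC 1 ->
  (0 <= r * s)%Z ->
  2 * (Rabs al + Rabs be + 1) + 6 / (2 * PI * Im tau) <= Rabs (IZR r) + Rabs (IZR s) ->
  Cmod (hecke_term a b c (Cmult w (qpow tau al)) (qpow tau be) tau r s)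
    <= exp (-3 * (Rabs (IZR r) + Rabs (IZR s))).
Proof.
  intros Ha Hb Hc Ht Hw Hrs Hlarge.
  rewrite hecke_term_normal, !Cmod_mult, Cmod_qpow, !Cmod_signpow, !Rmult_1_l
    by (exact Hw || exact minus_one_involution).
  replace (-2 * PI * _ * Im tau) with (- (2 * PI * Im tau *
    (al * IZR r + be * IZR s + IZR (a * (r * (r - 1) / 2) + b * r * s + c * (s * (s - 1) / 2)))))
    by ring.
  apply exponent_decay with (C0 := Rabs al + Rabs be + 1); [| | apply hecke_exponent_lower | ];
    auto.
  - pose proof PI_RGT_0. nra.
  - pose proof (Rabs_pos (IZR r)). pose proof (Rabs_pos (IZR s)). lra.
Qed.

Lemma hecke_f_shell_series a b c x y tau w al be :
  (1 <= a)%Z -> (1 <= b)%Z -> (1 <= c)%Z -> 0 < Im tau -> Cmult w w = RtoC 1 ->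
  x = Cmult w (qpow tau al) -> y = qpow tau be ->
  exists lp ln : C, is_series (shell_pos (hecke_term a b c x y tau)) lp /\
    is_series (shell_neg (hecke_term a b c x y tau)) ln /\
    hecke_f a b c x y tau = Cminus lp ln.
Proof.
  intros Ha Hb Hc Ht Hw -> ->.
  set (M0 := 2 * (Rabs al + Rabs be + 1) + 6 / (2 * PI * Im tau)).
  destruct (INR_archimed 1 M0 ltac:(lra)) as [N0 HN0]. rewrite Rmult_1_r in HN0.
  set (t := hecke_term a b c (Cmult w (qpow tau al)) (qpow tau be) tau).
  destruct (square_sums_Ccv (fun r s => t (Z.of_nat r) (Z.of_nat s)) N0) as [lp [Hp Cp]].
  { intros r s Hrs.
    assert (E : Rabs (IZR (Z.of_nat r)) + Rabs (IZR (Z.of_nat s)) = INR (r + s)).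
    { rewrite <- !INR_IZR_INZ, !Rabs_pos_eq, plus_INR by apply pos_INR. reflexivity. }
    rewrite <- E. apply hecke_term_decay; auto; try lia.
    rewrite E. apply le_INR in Hrs. fold M0. lra. }
  destruct (square_sums_Ccv (fun r s => t (- Z.of_nat (S r))%Z (- Z.of_nat (S s))%Z) N0)
    as [ln [Hn Cn]].
  { intros r s Hrs.
    assert (E : Rabs (IZR (- Z.of_nat (S r))) + Rabs (IZR (- Z.of_nat (S s)))
                = INR (r + s) + 2).
    { rewrite !opp_IZR, !Rabs_Ropp, <- !INR_IZR_INZ, !Rabs_pos_eq by apply pos_INR.
      rewrite plus_INR, !S_INR. ring. }
    eapply Rle_trans.
    - apply hecke_term_decay; auto; try lia.
      rewrite E. apply le_INR in Hrs. fold M0. lra.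
    - rewrite E. apply exp_le_mono. lra. }
  exists lp, ln. split; [exact Hp|]. split; [exact Hn|].
  apply hecke_f_of_Ccv. exact (Ccv_minus _ _ _ _ Cp Cn).
Qed.

(** * Summing the shell identities *)

Lemma series_combination_eq (A B P Q : nat -> C) (c1 c2 a b p q : C) :
  is_series A a -> is_series B b -> is_series P p -> is_series Q q ->
  (forall n, Cplus (A n) (Cmult c1 (B n)) = Cplus (P n) (Cmult c2 (Q n))) ->
  Cplus a (Cmult c1 b) = Cplus p (Cmult c2 q).
Proof.
  intros HA HB HP HQ Heq.
  assert (Hlin : forall (X Y : nat -> C) x y c, is_series X x -> is_series Y y ->
            is_series (fun n => Cplus (X n) (Cmult c (Y n))) (Cplus x (Cmult c y))).
  { intros X Y x y c HX HY. apply (is_series_plus X); [exact HX|].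
    exact (@is_series_scal C_AbsRing C_NormedModule c Y y HY). }
  apply (Ccv_unique (fun n => Csum n (fun i => Cplus (A i) (Cmult c1 (B i)))));
    apply is_series_Ccv; [exact (Hlin _ _ _ _ _ HA HB)|].
  apply (is_series_ext (fun n => Cplus (P n) (Cmult c2 (Q n)))).
  - intros n. symmetry. apply Heq.
  - exact (Hlin _ _ _ _ _ HP HQ).
Qed.

Lemma is_series_delay (a : nat -> C) l : is_series a l ->
  is_series (fun n => match n with O => RtoC 0 | S m => a m end) l.
Proof.
  intros H. apply (is_series_decr_1 (fun n => match n with O => RtoC 0 | S m => a m end)).
  match goal with |- is_series _ ?L => replace L with l; [exact H|] end.
  apply C_ext; simpl; ring.
Qed.

Lemma is_series_drop (a : nat -> C) l : is_series a l ->
  is_series (fun n => a (S n)) (Cminus l (a O)).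
Proof.
  intros H. apply (is_series_incr_1 a).
  match goal with |- is_series _ ?L => replace L with l; [exact H|] end.
  apply C_ext; simpl; ring.
Qed.

Lemma shell_series_identity (P1 N1 P2 N2 P3 N3 P4 N4 : nat -> C) (c1 c2 : C)
    (lp1 ln1 lp2 ln2 lp3 ln3 lp4 ln4 : C) :
  is_series P1 lp1 -> is_series N1 ln1 -> is_series P2 lp2 -> is_series N2 ln2 ->
  is_series P3 lp3 -> is_series N3 ln3 -> is_series P4 lp4 -> is_series N4 ln4 ->
  P1 O = P3 O ->
  (forall n, Cplus (P1 (S n)) (Cmult c1 (P2 n)) = Cplus (P3 (S n)) (Cmult c2 (N4 n))) ->
  Cmult c1 (N2 O) = Cmult c2 (P4 O) ->
  (forall n, Cplus (N1 n) (Cmult c1 (N2 (S n))) = Cplus (N3 n) (Cmult c2 (P4 (S n)))) ->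
  Cplus (Cminus lp1 ln1) (Cmult c1 (Cminus lp2 ln2)) =
  Cminus (Cminus lp3 ln3) (Cmult c2 (Cminus lp4 ln4)).
Proof.
  intros HP1 HN1 HP2 HN2 HP3 HN3 HP4 HN4 Hpos0 Hpos Hneg0 Hneg.
  assert (Epos : Cplus lp1 (Cmult c1 lp2) = Cplus lp3 (Cmult c2 ln4)).
  { apply (series_combination_eq P1 _ P3 _ c1 c2 lp1 lp2 lp3 ln4 HP1
             (is_series_delay _ _ HP2) HP3 (is_series_delay _ _ HN4)).
    intros [|n]; [rewrite Hpos0; ring | apply Hpos]. }
  assert (Eneg : Cplus ln1 (Cmult c1 (Cminus ln2 (N2 O))) =
                 Cplus ln3 (Cmult c2 (Cminus lp4 (P4 O))))
    by exact (series_combination_eq _ _ _ _ c1 c2 _ _ _ _ HN1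
                (is_series_drop _ _ HN2) HN3 (is_series_drop _ _ HP4) Hneg).
  transitivity (Cminus (Cplus lp1 (Cmult c1 lp2))
    (Cplus ln1 (Cmult c1 (Cminus ln2 (N2 O))) + Cmult c1 (N2 O)))%C; [ring|].
  rewrite Epos, Eneg, Hneg0. ring.
Qed.

(* pm = true : upper signs (+ on the left, - on the right);
   pm = false : lower signs. ± is sgnC pm, ∓ is - sgnC pm. *)
Theorem proposition5p1 (K : nat) (d e : Z) (tau : C) (pm : bool) :
  (0 < K)%nat -> 0 < Im tau ->
  let k := Z.of_nat K in
  let kr := INR K in
  Cplus (hecke_f 1 (2 * k + 1) 1 (qpow tau (IZR d)) (qpow tau (IZR e)) tau)
        (Cmult (Cmult (sgnC pm) (qpow tau ((kr + IZR d + IZR e) / 2)))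
               (hecke_f 1 (2 * k + 1) 1 (qpow tau (1 + kr + IZR d))
                                        (qpow tau (1 + kr + IZR e)) tau))
  =
  Cminus (hecke_f (k + 1) (k + 1) 1
            (Cmult (Copp (sgnC pm)) (qpow tau ((kr + IZR d + IZR e) / 2)))
            (qpow tau (IZR d)) tau)
         (Cmult (Cmult (sgnC pm) (qpow tau ((kr + 2 - IZR d - IZR e) / 2)))
                (hecke_f (k + 1) (k + 1) 1
                   (Cmult (Copp (sgnC pm)) (qpow tau (2 + (3 * kr - IZR d - IZR e) / 2)))
                   (qpow tau (kr + 2 - IZR e)) tau)).
Proof.
  intros _ Ht k kr.
  destruct (hecke_f_shell_series 1 (2 * k + 1) 1 (qpow tau (IZR d)) (qpow tau (IZR e))
              tau (RtoC 1) (IZR d) (IZR e))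
    as [lp1 [ln1 [Hp1 [Hn1 ->]]]];
    try lia; auto using one_involution; [symmetry; apply Cmult_1_l |].
  destruct (hecke_f_shell_series 1 (2 * k + 1) 1 (qpow tau (1 + kr + IZR d))
              (qpow tau (1 + kr + IZR e)) tau (RtoC 1) (1 + kr + IZR d) (1 + kr + IZR e))
    as [lp2 [ln2 [Hp2 [Hn2 ->]]]];
    try lia; auto using one_involution; [symmetry; apply Cmult_1_l |].
  destruct (hecke_f_shell_series (k + 1) (k + 1) 1
              (Cmult (Copp (sgnC pm)) (qpow tau ((kr + IZR d + IZR e) / 2)))
              (qpow tau (IZR d)) tau (sigma pm) ((kr + IZR d + IZR e) / 2) (IZR d))
    as [lp3 [ln3 [Hp3 [Hn3 ->]]]]; try lia; auto using sigma_involution.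
  destruct (hecke_f_shell_series (k + 1) (k + 1) 1
              (Cmult (Copp (sgnC pm)) (qpow tau (2 + (3 * kr - IZR d - IZR e) / 2)))
              (qpow tau (kr + 2 - IZR e)) tau (sigma pm)
              (2 + (3 * kr - IZR d - IZR e) / 2) (kr + 2 - IZR e))
    as [lp4 [ln4 [Hp4 [Hn4 ->]]]]; try lia; auto using sigma_involution.
  eapply shell_series_identity; eauto.
  - exact (shell_identity_pos0 tau pm K d e).
  - exact (shell_identity_pos tau pm K d e).
  - exact (shell_identity_neg0 tau pm K d e).
  - exact (shell_identity_neg tau pm K d e).
Qed.
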